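(* Every graph that is $C_3$-free and probe $P_5$-free is $3$-colourable. In particular, every probe $(C_3,P_5)$-free graph is $3$-colourable.
   Context: All graphs are finite and simple. $C_3$ is the triangle and $P_5$ is the path on $5$ vertices. A graph is $H$-free if it contains no induced subgraph isomorphic to $H$, and $(H_1,H_2)$-free if it is both $H_1$-free and $H_2$-free. For $G=(V,E)$ and a set $F$ of pairs of vertices, $G+F=(V,E\cup F)$. A graph $G$ is probe $P_5$-free if there is an independent set $N$ of $G$ and a set $F\subseteq\binom{N}{2}$ such that $G+F$ is $P_5$-free; $G$ is probe $(C_3,P_5)$-free if there is an independent set $N$ and $F\subseteq\binom{N}{2}$ such that $G+F$ is $(C_3,P_5)$-free. *)

From mathcomp Require Import all_boot.
Set Implicit Arguments. Unset Strict Implicit. Unset Printing Implicit Defensive.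

Definition simple_graph (T : finType) (e : rel T) : Prop :=
  symmetric e /\ irreflexive e.

Definition C3 : rel 'I_3 := fun i j => i != j.
Definition P5 : rel 'I_5 := fun i j => (i.+1 == j :> nat) || (j.+1 == i :> nat).

Definition has_induced (T : finType) (e : rel T) (k : nat) (h : rel 'I_k) : Prop :=
  exists f : 'I_k -> T, injective f /\ forall i j, i != j -> e (f i) (f j) = h i j.

Definition H_free (T : finType) (e : rel T) (k : nat) (h : rel 'I_k) : Prop :=
  ~ has_induced e h.

(* G + F : union of edge sets (F taken as a set of unordered pairs,
   represented by a relation and symmetrised). *)
Definition add_edges (T : finType) (e F : rel T) : rel T :=
  fun x y => [|| e x y, F x y | F y x].

Definition independent (T : finType) (e : rel T) (N : {set T}) : Prop :=
  forall x y, x \in N -> y \in N -> ~~ e x y.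

Definition pairs_in (T : finType) (N : {set T}) (F : rel T) : Prop :=
  forall x y, F x y -> [/\ x \in N, y \in N & x != y].

Definition probe_P5_free (T : finType) (e : rel T) : Prop :=
  exists (N : {set T}) (F : rel T),
    independent e N /\ pairs_in N F /\ H_free (add_edges e F) P5.

Definition probe_C3_P5_free (T : finType) (e : rel T) : Prop :=
  exists (N : {set T}) (F : rel T),
    independent e N /\ pairs_in N F /\
    H_free (add_edges e F) C3 /\ H_free (add_edges e F) P5.

Definition colourable (T : finType) (e : rel T) (k : nat) : Prop :=
  exists c : T -> 'I_k, forall x y, e x y -> c x != c y.

From mathcomp Require Import all_boot.
From Stdlib Require Import Classical.
Set Implicit Arguments. Unset Strict Implicit. Unset Printing Implicit Defensive.

(* Let N and F witness that the triangle-free graph G is probe P5-free.  F only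
   joins vertices of N, so an induced P5 of G whose last three vertices avoid N
   stays induced in G + F.
   If G - N has no induced C5, it is bipartite, by induction on the vertices:
   when a vertex w has two neighbours u and v, their neighbourhoods are nested
   (otherwise a C5 or a P5 runs through u, w, v), so u can take the colour of v;
   otherwise w takes the colour opposite to its only neighbour.  The independent
   set N then gets a third colour.
   If G - N has an induced C5, the vertices adjacent to it form a union of
   components of G, and each of them is adjacent to one of three consecutive
   vertices of the cycle.  Neighbourhoods are independent, so this 3-colours
   those components, and induction colours the rest of G. *)

Definition induced_path5 (T : Type) (e : rel T) (a b c d f : T) :=
  [&& e a b, e b c, e c d, e d f,
      ~~ e a c, ~~ e a d, ~~ e a f, ~~ e b d, ~~ e b f & ~~ e c f].

Definition induced_cycle5 (T : Type) (e : rel T) (a b c d f : T) :=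
  [&& e a b, e b c, e c d, e d f, e f a,
      ~~ e a c, ~~ e a d, ~~ e b d, ~~ e b f & ~~ e c f].

Section InducedCopies.

Variables (T : finType) (e : rel T).
Hypotheses (e_sym : symmetric e) (e_irr : irreflexive e).

Lemma has_induced_C3 a b c : e a b -> e b c -> e a c -> has_induced e C3.
Proof.
move=> ab bc ac; move: (e_irr a) (e_irr b) (e_irr c) => aa bb cc.
have [ba cb ca] : [/\ e b a, e c b & e c a] by split; rewrite e_sym.
exists (nth a [:: a; b; c]); split.
- move=> [[|[|[|i]]] ?] [[|[|[|j]]] ?] //= gij;
  by apply: val_inj => /=; subst; congruence.
- by move=> [[|[|[|i]]] ?] [[|[|[|j]]] ?] //= _; congruence.
Qed.

Lemma has_induced_P5 a b c d f : induced_path5 e a b c d f -> has_induced e P5.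
Proof.
case/and5P=> ab bc cd df.
case/and5P=> /negbTE ac /negbTE ad /negbTE af /negbTE bd /andP[/negbTE bf /negbTE cf].
move: (e_irr a) (e_irr b) (e_irr c) (e_irr d) (e_irr f) => aa bb cc dd ff.
have [ba cb dc fd] : [/\ e b a, e c b, e d c & e f d] by split; rewrite e_sym.
have [ca da fa] : [/\ e c a = false, e d a = false & e f a = false] by split; rewrite e_sym.
have [db fb fc] : [/\ e d b = false, e f b = false & e f c = false] by split; rewrite e_sym.
exists (nth a [:: a; b; c; d; f]); split.
- move=> [[|[|[|[|[|i]]]]] ?] [[|[|[|[|[|j]]]]] ?] //= gij;
  by apply: val_inj => /=; subst; congruence.
- by move=> [[|[|[|[|[|i]]]]] ?] [[|[|[|[|[|j]]]]] ?] //= _; congruence.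
Qed.

End InducedCopies.

Section AddEdges.

Variables (T : finType) (e F : rel T).

Lemma add_edgesW x y : e x y -> add_edges e F x y.
Proof. by rewrite /add_edges => ->. Qed.

Lemma add_edges_sym : symmetric e -> symmetric (add_edges e F).
Proof. by move=> e_sym x y; rewrite /add_edges e_sym orbCA orbC -orbA. Qed.

Lemma add_edges_irr (N : {set T}) :
  irreflexive e -> pairs_in N F -> irreflexive (add_edges e F).
Proof.
move=> e_irr F_N x; rewrite /add_edges e_irr orbb.
by apply/negP => /F_N[_ _]; rewrite eqxx.
Qed.

Lemma add_edges_out (N : {set T}) x y :
  pairs_in N F -> (x \notin N) || (y \notin N) -> add_edges e F x y = e x y.
Proof.
move=> F_N xyN.
have noF u v : (u \notin N) || (v \notin N) -> F u v = false.
  by move=> uvN; apply/negP => /F_N[uN vN _]; rewrite uN vN in uvN.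
by rewrite /add_edges !noF ?orbF // orbC.
Qed.

Lemma C3_free_add_edges : H_free (add_edges e F) C3 -> H_free e C3.
Proof.
move=> C3_free [g [g_inj g_adj]]; apply: C3_free; exists g; split=> // i j ij.
by rewrite /add_edges g_adj // /C3 ij.
Qed.

End AddEdges.

Definition proper_colouring (T : finType) (e : rel T) (k : nat) (A : {set T})
    (c : T -> nat) :=
  {in A, forall x, c x < k} /\ {in A &, forall x y, e x y -> c x != c y}.

Section Colouring.

Variables (T : finType) (e : rel T).
Hypotheses (e_sym : symmetric e) (e_irr : irreflexive e).

Lemma colourable_proper_colouring (k : nat) (c : T -> nat) :
  proper_colouring e k.+1 setT c -> colourable e k.+1.
Proof.
move=> [ck cp]; exists (fun x => inord (c x)) => x y xy.
move: (cp x y (in_setT x) (in_setT y) xy); apply: contra_neq => /(congr1 val).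
by rewrite /= !inordK ?ck ?in_setT.
Qed.

Lemma proper_colouring0 (k : nat) : proper_colouring e k set0 (fun=> 0).
Proof. by split=> x; rewrite inE. Qed.

Lemma proper_colouring_glue (k : nat) (A D : {set T}) (c1 c2 : T -> nat) :
  {in D & A :\: D, forall x y, ~~ e x y} ->
  proper_colouring e k D c1 -> proper_colouring e k (A :\: D) c2 ->
  proper_colouring e k A (fun x => if x \in D then c1 x else c2 x).
Proof.
move=> cut [c1k c1p] [c2k c2p]; split=> [x xA | x y xA yA xy].
  by case: ifP => [/c1k | xD]; last by apply: c2k; rewrite inE xD.
have xAD : (x \in D) = false -> x \in A :\: D by rewrite inE xA => ->.
have yAD : (y \in D) = false -> y \in A :\: D by rewrite inE yA => ->.
case: ifP => xD; case: ifP => yD; first exact: c1p.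
- by move: (cut x y xD (yAD yD)); rewrite xy.
- by move: (cut y x yD (xAD xD)); rewrite e_sym xy.
- exact: c2p (xAD xD) (yAD yD) xy.
Qed.

Lemma proper_colouring_dominated (k : nat) (B : {set T}) (c : T -> nat) (u v : T) :
  u \in B -> v \in B -> u != v -> {in B, forall z, e u z -> e v z} ->
  proper_colouring e k (B :\ u) c ->
  proper_colouring e k B (fun x => if x == u then c v else c x).
Proof.
move=> uB vB uv dom [ck cp].
have vBu : v \in B :\ u by rewrite !inE eq_sym uv.
have xBu x : x \in B -> x != u -> x \in B :\ u by rewrite !inE => -> ->.
split=> [x xB | x y xB yB xy].
  by case: eqP => [_ | /eqP xu]; apply: ck; [exact: vBu | exact: xBu].
case: (eqVneq x u) => [xu | xu]; case: (eqVneq y u) => [yu | yu].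
- by move: xy; rewrite xu yu e_irr.
- by rewrite xu in xy; exact: cp vBu (xBu _ yB yu) (dom y yB xy).
- rewrite yu e_sym in xy; rewrite eq_sym.
  exact: cp vBu (xBu _ xB xu) (dom x xB xy).
- exact: cp (xBu _ xB xu) (xBu _ yB yu) xy.
Qed.

Lemma proper_colouring_leaf (B : {set T}) (c : T -> nat) (w : T) :
  w \in B -> {in B &, forall u v, e w u -> e w v -> u = v} ->
  proper_colouring e 2 (B :\ w) c ->
  exists c', proper_colouring e 2 B c'.
Proof.
move=> wB leaf [ck cp].
have xBw x : x \in B -> x != w -> x \in B :\ w by rewrite !inE => -> ->.
pose cw := if [pick u in B | e w u] is Some u then 1 - c u else 0.
have cw_nbr u : u \in B -> e w u -> cw != c u.
  move=> uB wu; rewrite /cw.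
  case: pickP => [v /andP[vB wv] | /(_ u)]; last by rewrite uB wu.
  have wu' : u != w by apply: contraTneq wu => ->; rewrite e_irr.
  by rewrite (leaf v u) //; move: (ck u (xBw _ uB wu')); case: (c u) => [|[]].
exists (fun x => if x == w then cw else c x); split=> [x xB | x y xB yB xy].
  case: eqP => [_ | /eqP xw]; last exact: ck (xBw _ xB xw).
  by rewrite /cw; case: pickP => // u _; rewrite ltnS leq_subr.
case: (eqVneq x w) => [xw | xw]; case: (eqVneq y w) => [yw | yw].
- by move: xy; rewrite xw yw e_irr.
- by rewrite xw in xy; exact: cw_nbr.
- by rewrite yw e_sym in xy; rewrite eq_sym; exact: cw_nbr.
- exact: cp (xBw _ xB xw) (xBw _ yB yw) xy.
Qed.

Lemma proper_colouring_add_independent (k : nat) (A N : {set T}) (c : T -> nat) :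
  independent e N -> proper_colouring e k (A :\: N) c ->
  proper_colouring e k.+1 A (fun x => if x \in N then k else c x).
Proof.
move=> indN [ck cp].
have xAN x : x \in A -> (x \in N) = false -> x \in A :\: N by rewrite inE => -> ->.
split=> [x xA | x y xA yA xy]; first by case: ifP => // /(xAN _ xA)/ck/ltnW.
case: ifP => xN; case: ifP => yN.
- by move: (indN x y xN yN); rewrite xy.
- by rewrite eq_sym ltn_eqF ?(ck _ (xAN _ yA yN)).
- by rewrite ltn_eqF ?(ck _ (xAN _ xA xN)).
- exact: cp (xAN _ xA xN) (xAN _ yA yN) xy.
Qed.

Lemma induced_cycle5_rot a b c d f :
  induced_cycle5 e a b c d f -> induced_cycle5 e b c d f a.
Proof.
case/and5P=> ab bc cd df /and5P[fa ac ad bd /andP[bf cf]].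
by rewrite /induced_cycle5 bc cd df fa ab bd bf cf (e_sym c) ac (e_sym d) ad.
Qed.

Hypothesis e_C3_free : H_free e C3.

Lemma C3_free_nonadj x y z : e x y -> e y z -> ~~ e x z.
Proof.
move=> xy yz; apply/negP => xz; apply: e_C3_free.
exact: (has_induced_C3 e_sym e_irr xy yz xz).
Qed.

Lemma proper_colouring_nbrs (D : {set T}) (s : seq T) :
  {in D, forall x, has (e x) s} -> proper_colouring e (size s) D (fun x => find (e x) s).
Proof.
move=> Ds; split=> [x /Ds | x y /Ds xs /Ds ys xy]; first by rewrite has_find.
apply/eqP => same; have := nth_find x xs; have := nth_find x ys; rewrite -same => yv.
by rewrite (negbTE (C3_free_nonadj xy yv)).
Qed.

Section Bipartite.

Variable S : {set T}.
Hypothesis S_P5_free :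
  forall a b c d f, {subset [:: a; b; c; d; f] <= S} -> ~~ induced_path5 e a b c d f.
Hypothesis S_C5_free :
  forall a b c d f, {subset [:: a; b; c; d; f] <= S} -> ~~ induced_cycle5 e a b c d f.

Lemma common_nbr_nested u v w :
  u \in S -> v \in S -> w \in S -> e w u -> e w v ->
  {in S, forall z, e u z -> e v z} \/ {in S, forall z, e v z -> e u z}.
Proof.
move=> uS vS wS wu wv.
case: (pickP [pred a in S | e u a && ~~ e v a]); last first.
  by move=> uv_sub; left=> z zS uz; move: (uv_sub z); rewrite /= zS uz => /negbFE.
move=> a /and3P[aS ua va].
right=> b bS vb; apply: contraT => ub.
have uv : ~~ e u v by rewrite e_sym in wu; exact: C3_free_nonadj wu wv.
have wa : ~~ e w a := C3_free_nonadj wu ua.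
have wb : ~~ e w b := C3_free_nonadj wv vb.
have sub : {subset [:: a; u; w; v; b] <= S} by apply/allP; rewrite /= aS uS wS vS bS.
case ab: (e a b).
- move: (S_C5_free sub); rewrite /induced_cycle5 (e_sym a u) ua (e_sym u w) wu wv vb.
  by rewrite (e_sym b a) ab (e_sym a w) wa (e_sym a v) va uv ub wb.
- move: (S_P5_free sub); rewrite /induced_path5 (e_sym a u) ua (e_sym u w) wu wv vb.
  by rewrite ab (e_sym a w) wa (e_sym a v) va uv ub wb.
Qed.

Lemma bipartite_on (B : {set T}) : B \subset S -> exists c, proper_colouring e 2 B c.
Proof.
elim: {B}_.+1 {-2}B (ltnSn #|B|) => // n IH B Bn BS.
case: (set_0Vmem B) => [-> | [w wB]]; first by exists (fun=> 0); exact: proper_colouring0.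
have IHD1 u : u \in B -> exists c, proper_colouring e 2 (B :\ u) c.
  move=> uB; apply: IH; last exact: subset_trans (subD1set B u) BS.
  by rewrite (cardsD1 u B) uB in Bn.
have inS := subsetP BS.
pose two_nbrs (uv : T * T) :=
  [&& uv.1 \in B, uv.2 \in B, uv.1 != uv.2, e w uv.1 & e w uv.2].
case: (pickP two_nbrs).
- move=> [u v] /and5P[/= uB vB uv wu wv].
  case: (common_nbr_nested (inS u uB) (inS v vB) (inS w wB) wu wv) => dom.
  + have [c cp] := IHD1 u uB; exists (fun x => if x == u then c v else c x).
    exact: (proper_colouring_dominated uB vB uv (fun z zB => dom z (inS z zB)) cp).
  + have [c cp] := IHD1 v vB; exists (fun x => if x == v then c u else c x).
    have vu : v != u by rewrite eq_sym.
    exact: (proper_colouring_dominated vB uB vu (fun z zB => dom z (inS z zB)) cp).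
- move=> leaf; have [c cp] := IHD1 w wB; apply: (proper_colouring_leaf wB _ cp).
  move=> u v uB vB wu wv; apply/eqP; apply: contraT => uv.
  by move: (leaf (u, v)); rewrite /two_nbrs /= uB vB uv wu wv.
Qed.

End Bipartite.

Section ProbeP5Free.

Variables (F : rel T) (N : {set T}).
Hypotheses (N_indep : independent e N) (F_N : pairs_in N F).
Hypothesis eF_P5_free : H_free (add_edges e F) P5.

Lemma no_induced_path5_off_N a b c d f :
  c \notin N -> d \notin N -> f \notin N -> ~~ induced_path5 e a b c d f.
Proof.
move=> cN dN fN; apply/negP => /andP[ab path]; apply: eF_P5_free.
apply: (@has_induced_P5 _ _ (add_edges_sym F e_sym) (add_edges_irr e_irr F_N) a b c d f).
move: path; rewrite /induced_path5 (add_edgesW F ab) !(add_edges_out e F_N).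
all: by rewrite ?cN ?dN ?fN ?orbT.
Qed.

Lemma cycle5_nbr_opposite a b c d f x :
  induced_cycle5 e a b c d f -> b \notin N -> c \notin N -> d \notin N ->
  e x a -> e x c || e x d.
Proof.
case/and5P=> ab bc cd _ /and5P[_ ac ad bd _] bN cN dN xa.
apply: contraT; rewrite negb_or => /andP[xc xd].
have xb := C3_free_nonadj xa ab.
move: (no_induced_path5_off_N x a bN cN dN).
by rewrite /induced_path5 xa ab bc cd xb xc xd ac ad bd.
Qed.

Lemma cycle5_nbr_first3 a b c d f x :
  induced_cycle5 e a b c d f ->
  a \notin N -> b \notin N -> c \notin N -> d \notin N -> f \notin N ->
  has (e x) [:: a; b; c; d; f] -> has (e x) [:: a; b; c].
Proof.
move=> C aN bN cN dN fN.
have C3 := induced_cycle5_rot (induced_cycle5_rot (induced_cycle5_rot C)).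
have C4 := induced_cycle5_rot C3.
rewrite /= !orbF; case/orP=> [-> | /orP[-> | /orP[-> | /orP[xd | xf]]]]; rewrite ?orbT //.
- by case/orP: (cycle5_nbr_opposite C3 fN aN bN xd) => ->; rewrite ?orbT.
- by case/orP: (cycle5_nbr_opposite C4 aN bN cN xf) => ->; rewrite ?orbT.
Qed.

Lemma cycle5_nbr_closed_at a b c d f x y :
  induced_cycle5 e a b c d f ->
  a \notin N -> b \notin N -> c \notin N -> d \notin N -> f \notin N ->
  e x a -> e y x -> has (e y) [:: a; b; c; d; f].
Proof.
have core a' b' c' d' f' : induced_cycle5 e a' b' c' d' f' ->
    a' \notin N -> b' \notin N -> c' \notin N -> e x a' -> ~~ e x c' -> e y x ->
    has (e y) [:: a'; b'; c'; d'; f'].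
  case/and5P=> ab bc _ _ /and5P[_ ac _ _ _] aN bN cN xa xc yx.
  apply: contraT; rewrite /= !negb_or => /and5P[ya yb yc _ _].
  have xb := C3_free_nonadj xa ab.
  move: (no_induced_path5_off_N y x aN bN cN).
  by rewrite /induced_path5 yx xa ab bc ya yb yc xb xc ac.
move=> C aN bN cN dN fN xa yx.
case xc: (e x c); last exact: core C aN bN cN xa (negbT xc) yx.
have C2 := induced_cycle5_rot (induced_cycle5_rot C).
have fa : e a f by case/and5P: C => _ _ _ _ /andP[+ _]; rewrite e_sym.
rewrite -(has_rot 2); exact: core C2 cN dN fN xc (C3_free_nonadj xa fa) yx.
Qed.

Lemma cycle5_nbr_closed a b c d f x y :
  induced_cycle5 e a b c d f ->
  a \notin N -> b \notin N -> c \notin N -> d \notin N -> f \notin N ->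
  has (e x) [:: a; b; c; d; f] -> e y x -> has (e y) [:: a; b; c; d; f].
Proof.
move=> C aN bN cN dN fN xs yx; have C1 := induced_cycle5_rot C.
have C2 := induced_cycle5_rot C1; have C3 := induced_cycle5_rot C2.
have C4 := induced_cycle5_rot C3.
move: xs; rewrite [has _ _]/= !orbF.
case/orP=> [xa | /orP[xb | /orP[xc | /orP[xd | xf]]]].
- exact: cycle5_nbr_closed_at C aN bN cN dN fN xa yx.
- by rewrite -(has_rot 1); exact: cycle5_nbr_closed_at C1 bN cN dN fN aN xb yx.
- by rewrite -(has_rot 2); exact: cycle5_nbr_closed_at C2 cN dN fN aN bN xc yx.
- by rewrite -(has_rot 3); exact: cycle5_nbr_closed_at C3 dN fN aN bN cN xd yx.
- by rewrite -(has_rot 4); exact: cycle5_nbr_closed_at C4 fN aN bN cN dN xf yx.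
Qed.

Lemma probe_three_colouring_C5_free (A : {set T}) :
  (forall a b c d f, {subset [:: a; b; c; d; f] <= A :\: N} ->
     ~~ induced_cycle5 e a b c d f) ->
  exists c, proper_colouring e 3 A c.
Proof.
move=> A_C5_free; have [c cp] : exists c, proper_colouring e 2 (A :\: N) c.
  apply: (bipartite_on _ A_C5_free (subxx _)) => a b c d f sub.
  have outN v : v \in [:: a; b; c; d; f] -> v \notin N by move/sub/setDP=> [].
  by apply: no_induced_path5_off_N; apply: outN; rewrite !inE eqxx ?orbT.
by exists (fun x => if x \in N then 2 else c x); exact: proper_colouring_add_independent.
Qed.

Lemma probe_three_colouring (A : {set T}) : exists c, proper_colouring e 3 A c.
Proof.
elim: {A}_.+1 {-2}A (ltnSn #|A|) => // n IH A An.
case: (classic (exists a b c d f, {subset [:: a; b; c; d; f] <= A :\: N} /\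
                                  induced_cycle5 e a b c d f)); last first.
  move=> no_C5; apply: probe_three_colouring_C5_free => a b c d f sub.
  by apply/negP => C; apply: no_C5; exists a, b, c, d, f.
move=> [a [b [c [d [f [sub C]]]]]].
have inAN v : v \in [:: a; b; c; d; f] -> v \in A /\ v \notin N by move/sub/setDP.
have [aN bN cN dN fN] : [/\ a \notin N, b \notin N, c \notin N, d \notin N & f \notin N].
  by split; apply: (inAN _ _).2; rewrite !inE eqxx ?orbT.
pose D := [set x in A | has (e x) [:: a; b; c; d; f]].
have aA : a \in A := (inAN a (mem_head _ _)).1.
have aD : a \in D by case/andP: C => ab _; rewrite inE aA /= ab orbT.
have [c' c'p] : exists c', proper_colouring e 3 (A :\: D) c'.
  apply: IH; rewrite -ltnS; apply: leq_trans An.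
  apply: leq_ltn_trans (proper_card (properD1 aA)).
  by apply: subset_leq_card; apply: setDS; rewrite sub1set.
exists (fun x => if x \in D then find (e x) [:: a; b; c] else c' x).
apply: proper_colouring_glue => //.
- move=> x y; rewrite !inE => /andP[xA xs] /andP[yD yA]; apply: contraNN yD => xy.
  by rewrite yA (cycle5_nbr_closed C aN bN cN dN fN xs) // e_sym.
- apply: (@proper_colouring_nbrs D [:: a; b; c]) => x.
  rewrite inE => /andP[_].
  exact: cycle5_nbr_first3 C aN bN cN dN fN.
Qed.

Lemma probe_P5_free_colourable : colourable e 3.
Proof.
have [c cp] := probe_three_colouring setT.
exact: colourable_proper_colouring cp.
Qed.

End ProbeP5Free.

End Colouring.

Theorem mainTheorem4 :
  (forall (T : finType) (e : rel T), simple_graph e ->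
     H_free e C3 -> probe_P5_free e -> colourable e 3) /\
  (forall (T : finType) (e : rel T), simple_graph e ->
     probe_C3_P5_free e -> colourable e 3).
Proof.
split=> T e [e_sym e_irr].
- move=> e_C3_free [N [F [N_indep [F_N eF_P5_free]]]].
  exact: (probe_P5_free_colourable e_sym e_irr e_C3_free N_indep F_N eF_P5_free).
- move=> [N [F [N_indep [F_N [eF_C3_free eF_P5_free]]]]].
  have e_C3_free := C3_free_add_edges eF_C3_free.
  exact: (probe_P5_free_colourable e_sym e_irr e_C3_free N_indep F_N eF_P5_free).
Qed.
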